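(* Let $D\colon \omega\to \omega^+$ be a function such that (i) $D$ is increasing (i.e., $m\le n$ implies $D(m)\le D(n)$), (ii) $D(0)=0$ or $D(0)=1$, and (iii) $D(2)>0$. Then there is a countably infinite total algebra $\mathbf{A}$ such that $d_{\mathbf{A}}(n)=D(n)$ for all $n\in\omega$.
   Context: $\omega=\{0,1,2,\dots\}$ and $\omega^+=\omega\cup\{\omega\}$, ordered naturally with $\omega$ largest. For an algebra $\mathbf{A}$ and $n\in\omega$, $d_{\mathbf{A}}(n)$ is the least size of a generating set of the direct power $\mathbf{A}^n$, with $d_{\mathbf{A}}(n)=\omega$ if $\mathbf{A}^n$ is not finitely generated ($\mathbf{A}^0$ is the one-element algebra). *)

From Stdlib Require List.
From mathcomp Require Import all_boot.
Set Implicit Arguments. Unset Strict Implicit. Unset Printing Implicit Defensive.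

Record algebra := Algebra {
  carrier : Type;
  sig : Type;
  arity : sig -> nat;
  op : forall i : sig, {ffun 'I_(arity i) -> carrier} -> carrier }.

Definition power (A : algebra) (n : nat) : algebra :=
  @Algebra {ffun 'I_n -> carrier A} (sig A) (@arity A)
    (fun i (x : {ffun 'I_(arity i) -> {ffun 'I_n -> carrier A}}) =>
       [ffun j : 'I_n => op [ffun k => x k j]]).

(* Subuniverses (possibly empty) of an algebra. *)
Definition subuniverse (A : algebra) (S : carrier A -> Prop) : Prop :=
  forall (i : sig A) (x : {ffun 'I_(arity i) -> carrier A}),
    (forall k, S (x k)) -> S (op x).

Definition generates (A : algebra) (X : seq (carrier A)) : Prop :=
  forall S, subuniverse S -> (forall x, List.In x X -> S x) -> forall y, S y.

(* A^n has a generating set of size at most k (a list of length k). *)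
Definition gen_by (A : algebra) (n k : nat) : Prop :=
  exists X : seq (carrier (power A n)), size X = k /\ generates X.

(* omega^+ = omega ∪ {omega}. *)
Inductive omegap := ofNat of nat | omega.

Definition ole (a b : omegap) : bool :=
  match a, b with
  | ofNat m, ofNat n => m <= n
  | _, omega => true
  | omega, ofNat _ => false
  end.

(* d_is A n v  <->  d_A(n) = v : least size of a generating set of A^n,
   omega if A^n is not finitely generated. *)
Definition d_is (A : algebra) (n : nat) (v : omegap) : Prop :=
  match v with
  | ofNat k => gen_by A n k /\ forall j, gen_by A n j -> k <= j
  | omega => forall j, ~ gen_by A n j
  end.

Definition countably_infinite (T : Type) : Prop :=
  exists f : nat -> T, bijective f.

(* Take A = ω. Code triples injectively by positive naturals ⟨m,i,l⟩. For every m with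
   D(m) = k finite and every y ∈ ω^m, add a k-ary operation sending the row
   (⟨m,j,l⟩)_{l<k} to y_j (and everything else to 0). Applied coordinatewise to the k
   columns (⟨m,j,l⟩)_{j<m}, this operation yields y, so D(m) elements generate A^m.
   Conversely, a point of A^n with distinct nonzero coordinates can only arise from an
   operation of some m ≥ n whose D(m) ≥ D(n) arguments are pairwise distinct points of
   the same kind; hence the points of a generating set of size < D(n), together with
   all other points, would form a proper subuniverse. *)
From mathcomp Require Import all_boot zify.
From Stdlib Require List.
Set Implicit Arguments. Unset Strict Implicit.

Lemma In_memP (T : eqType) (x : T) (s : seq T) : reflect (List.In x s) (x \in s).
Proof.
elim: s => [|a s IH] /=; first by rewrite in_nil; constructor.
rewrite in_cons; apply: (iffP orP) => [[/eqP -> | /IH] | [-> | /IH]]; rewrite ?eqxx; auto.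
Qed.

Lemma ole_trans a b c : ole a b -> ole b c -> ole a c.
Proof. by case: a => [x|]; case: b => [y|]; case: c => [z|] //=; apply: leq_trans. Qed.

Definition code (m i l : nat) : nat := (pickle (m, i, l)).+1.

Lemma code_inj m i l m' i' l' : code m i l = code m' i' l' -> (m, i, l) = (m', i', l').
Proof. by move=> [] /(pcan_inj pickleK). Qed.

Definition inj_pos n (v : {ffun 'I_n -> nat}) : bool :=
  injectiveb v && [forall j, v j != 0].

Lemma fresh_inj_pos n (X : seq {ffun 'I_n.+1 -> nat}) :
  exists2 y, y \notin X & inj_pos y.
Proof.
pose c := \max_(x <- X) x ord0; exists [ffun j : 'I_n.+1 => c + j.+1].
  apply/negP => /(@leq_bigmax_seq _ X xpredT (fun x => x ord0)) /(_ erefl).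
  by rewrite ffunE -/c; lia.
apply/andP; split; last by apply/forallP => j; rewrite ffunE addnS.
by apply/injectiveP => j j'; rewrite !ffunE => /addnI [/val_inj].
Qed.

Section CodedAlgebra.

Variable D : nat -> omegap.

Record code_sig := CodeSig {
  sig_dim : nat;
  sig_arity : nat;
  sig_arityE : D sig_dim = ofNat sig_arity;
  sig_target : {ffun 'I_sig_dim -> nat} }.

Definition code_row (m k : nat) (j : 'I_m) : {ffun 'I_k -> nat} :=
  [ffun l : 'I_k => code m j l].

Definition code_op (s : code_sig) (q : {ffun 'I_(sig_arity s) -> nat}) : nat :=
  if [pick j | q == code_row (sig_arity s) j] is Some j then sig_target s j else 0.

Definition code_alg : algebra := @Algebra nat code_sig sig_arity code_op.

Definition code_col (n k : nat) (l : 'I_k) : {ffun 'I_n -> nat} :=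
  [ffun j : 'I_n => code n j l].

(* For k = 0 every row is the empty tuple; this is why D(2) > 0 is needed. *)
Lemma code_row_inj m k : (k = 0 -> m <= 1) -> injective (@code_row m k).
Proof.
case: k => [m_small i j _ | k _ i j /(congr1 (fun f : {ffun 'I_k.+1 -> nat} => f ord0))].
  by apply: val_inj => /=; have := m_small erefl; have := ltn_ord i; have := ltn_ord j; lia.
by rewrite !ffunE => /code_inj [/val_inj].
Qed.

Lemma gen_by_code_alg n k : D n = ofNat k -> (k = 0 -> n <= 1) -> gen_by code_alg n k.
Proof.
move=> Dn k0_small; exists [seq code_col n l | l <- enum 'I_k].
split=> [|S subS colS y]; first by rewrite size_map size_enum_ord.
have op_cols : @op (power code_alg n) (CodeSig Dn y) [ffun l => code_col n l] = y.
  apply/ffunP => j; rewrite ffunE /= /code_op /=.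
  have -> : [ffun l => [ffun l' => code_col n l'] l j] = code_row k j.
    by apply/ffunP => l; rewrite !ffunE.
  case: pickP => [i /eqP /(code_row_inj k0_small) -> // | /(_ j)].
  by rewrite eqxx.
rewrite -op_cols; apply: subS => l; apply: colS; apply/In_memP.
by rewrite ffunE; apply: map_f; rewrite mem_enum.
Qed.

Lemma code_op_inj_pos n (s : code_sig) (w : {ffun 'I_(sig_arity s) -> {ffun 'I_n -> nat}}) :
  inj_pos (@op (power code_alg n) s w) ->
  exists2 f : 'I_n -> 'I_(sig_dim s), injective f &
    forall l j, w l j = code (sig_dim s) (f j) l.
Proof.
case: s w => m k Dm y w /andP [/injectiveP o_inj /forallP o_pos].
have picked j : {i | [ffun l : 'I_k => w l j] == code_row k i
                   & @op (power code_alg n) (CodeSig Dm y) w j = y i}.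
  move: (o_pos j); rewrite /= ffunE /code_op /=.
  by case: pickP => [i wi _ | _]; [exists i | rewrite eqxx].
exists (fun j => s2val (picked j)) => [j j' eq_f | l j].
  apply: o_inj; move: eq_f.
  by case: (picked j) => i wi oj; case: (picked j') => i' wi' oj' /= eq_i; rewrite oj oj' eq_i.
case: (picked j) => i /eqP /(congr1 (fun f : {ffun 'I_k -> nat} => f l)) + _ /=.
by rewrite /code_row !ffunE.
Qed.

Hypothesis D_mono : forall m n, m <= n -> ole (D m) (D n).

Lemma not_gen_by_code_alg n j : 0 < n -> ~~ ole (D n) (ofNat j) -> ~ gen_by code_alg n j.
Proof.
case: n => // n _ Dn_big [X [sizeX genX]].
have [y yX y_inj_pos] := fresh_inj_pos X.
suff : y \in X \/ ~~ inj_pos y by rewrite y_inj_pos (negbTE yX); case.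
apply: (genX (fun v => v \in X \/ ~~ inj_pos v)) => [s w w_sub | x /In_memP]; last by left.
have [/code_op_inj_pos [f f_inj w_code] | ] := boolP (inj_pos _); last by right.
exfalso; case/negP: Dn_big.
have w_X l : w l \in X.
  case: (w_sub l) => // /negP[]; apply/andP; split; last by apply/forallP => i; rewrite w_code.
  by apply/injectiveP => i i'; rewrite !w_code => /code_inj [/val_inj/f_inj].
have w_inj : injective w.
  move=> l l' eq_w; have := congr1 (fun v : {ffun _ -> nat} => v ord0) eq_w.
  by rewrite /= !w_code => /code_inj [/val_inj].
have arity_le : sig_arity s <= j.
  rewrite -sizeX -(size_enum_ord (sig_arity s)) -(size_map w).
  apply: uniq_leq_size => [|_ /mapP [l _ ->] //].
  by rewrite map_inj_uniq ?enum_uniq.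
have dim_ge : n.+1 <= sig_dim s by have := leq_card f f_inj; rewrite !card_ord.
by apply: ole_trans (D_mono dim_ge) _; rewrite sig_arityE.
Qed.

Lemma not_gen_by0_code_alg : D 0 = ofNat 1 -> ~ gen_by code_alg 0 0.
Proof.
move=> D0 [[|x X] [//= _ genX]].
have empty_sub : subuniverse (A := power code_alg 0) (fun _ => False).
  move=> s w w_empty; have := D_mono (leq0n (sig_dim s)).
  by rewrite D0 sig_arityE => /(@Ordinal _ 0)/w_empty.
exact: (genX _ empty_sub) [ffun => 0].
Qed.

End CodedAlgebra.

Theorem theorem3p4 (D : nat -> omegap) :
  (forall m n, m <= n -> ole (D m) (D n)) ->
  (D 0 = ofNat 0 \/ D 0 = ofNat 1) ->
  ole (ofNat 1) (D 2) ->
  exists A : algebra, countably_infinite (carrier A) /\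
    forall n : nat, d_is A n (D n).
Proof.
move=> D_mono D0 D2; exists (code_alg D); split; first by exists id; exists id.
have gen_by_D n k : D n = ofNat k -> gen_by (code_alg D) n k.
  move=> Dn; apply: (gen_by_code_alg Dn) => k0; rewrite leqNgt; apply/negP => /D_mono.
  by move/(ole_trans D2); rewrite Dn k0.
case=> [|n].
  case: D0 => D0; rewrite D0; split=> [|[|j] //]; [exact: gen_by_D | exact: gen_by_D |].
  by move/(not_gen_by0_code_alg D_mono D0).
have lower j : ~~ ole (D n.+1) (ofNat j) -> ~ gen_by (code_alg D) n.+1 j.
  exact: not_gen_by_code_alg.
case Dn: (D n.+1) lower => [k|] lower /=; last by move=> j; apply: lower.
split=> [|j gen]; first exact: gen_by_D.
by apply: contraT => /lower.
Qed.
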